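(* In the adversarial edge arrival model for integral matchings, no online algorithm (deterministic or randomized) achieves a guarantee larger than $0.58065$ on graphs of maximum degree three. That is, for every online algorithm $\mathcal{ALG}$ and every $\gamma>0.58065$ there is an instance (a graph of maximum degree at most three with an adversarial edge arrival order) and a timepoint $t$ at which $\mathbb{E}[|M_t|] < \gamma\,\nu(G_t)$, where $M_t$ is the matching held by $\mathcal{ALG}$ at time $t$.
   Context: Adversarial edge arrival model for integral matchings: edges arrive one at a time in an order chosen by an (oblivious) adversary; upon arrival of an edge, the algorithm must immediately and irrevocably decide whether to add it to its current matching (which must remain a matching). A (possibly randomized) algorithm achieves guarantee $\gamma$ if at every timepoint the expected size of its matching is at least $\gamma\cdot\nu(G_t)$, where $\nu(G_t)$ is the maximum matching cardinality of the arrived graph $G_t$. *)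

From HB Require Import structures.
From mathcomp Require Import all_boot all_order all_algebra.
From mathcomp Require Import reals.
Set Implicit Arguments. Unset Strict Implicit. Unset Printing Implicit Defensive.
Import Order.TTheory GRing.Theory Num.Theory.

(* Vertices are labelled by naturals; an (undirected) edge is a pair. *)
Definition edge := (nat * nat)%type.

Definition verts (m : seq edge) : seq nat := flatten [seq [:: e.1; e.2] | e <- m].

Definition is_matching (m : seq edge) : bool := uniq (verts m).

Definition nu (s : seq edge) : nat :=
  \max_(b : (size s).-tuple bool | is_matching (mask b s)) size (mask b s).

Definition norm_edge (e : edge) : edge := (minn e.1 e.2, maxn e.1 e.2).
Definition deg (s : seq edge) (v : nat) : nat :=
  count (fun e : edge => (e.1 == v) || (e.2 == v)) s.
Definition valid_instance (s : seq edge) : bool :=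
  [&& all (fun e : edge => e.1 != e.2) s,
      uniq (map norm_edge s) &
      all (fun v => deg s v <= 3) (verts s)].

(* A randomized online algorithm, as a behavioural strategy: given the edges
   arrived so far, its own past decisions (true = edge was added), and the
   newly arriving edge, it returns the probability of adding the new edge
   (this is only consulted when adding it keeps a matching; otherwise the
   edge is necessarily rejected). *)
Definition online_alg (R : realType) := seq edge -> seq bool -> edge -> R.

Definition feasible (e : edge) (M : seq edge) : bool :=
  (e.1 \notin verts M) && (e.2 \notin verts M).

Local Open Scope ring_scope.

Fixpoint exp_run (R : realType) (alg : online_alg R) (past : seq edge)
    (dec : seq bool) (fut : seq edge) (k : nat) : R :=
  match k, fut with
  | k'.+1, e :: fut' =>
      if feasible e (mask dec past) then
        let p := alg past dec e in
        p * exp_run alg (rcons past e) (rcons dec true) fut' k'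
        + (1 - p) * exp_run alg (rcons past e) (rcons dec false) fut' k'
      else exp_run alg (rcons past e) (rcons dec false) fut' k'
  | _, _ => (count id dec)%:R
  end.

Definition expected_size (R : realType) (alg : online_alg R) (s : seq edge)
    (t : nat) : R := exp_run alg [::] [::] s t.

From HB Require Import structures.
From mathcomp Require Import all_boot all_order all_algebra.
From mathcomp Require Import reals ring lra.
Set Implicit Arguments. Unset Strict Implicit. Unset Printing Implicit Defensive.
Import Order.TTheory GRing.Theory Num.Theory.
Local Open Scope ring_scope.

(* Yao-style averaging over a tree of adversarial continuations.  Each node of
   the tree is an arrival order (the path from the root) together with a
   weight w and a matching of that order.  If an online algorithm met the
   guarantee gamma on every node, the weighted sum of its expected matching
   sizes would be at least gamma * K, where K is the weighted sum of the
   witness matching sizes.  On the other hand, the weighted sum is a convex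
   combination over the algorithm's coin flips, so it is at most the best
   value D any deterministic sequence of decisions achieves on the tree;
   D is computed by backward induction.  For the tree below D = 198 and
   K = 341, and 198 / 341 < 0.58065. *)

Record instance := Instance { weight : nat; witness : seq edge; arrivals : seq edge }.

Definition instance_tuple (x : instance) := (weight x, witness x, arrivals x).
Definition tuple_instance (y : nat * seq edge * seq edge) := Instance y.1.1 y.1.2 y.2.
Lemma instance_tupleK : cancel instance_tuple tuple_instance. Proof. by case. Qed.
HB.instance Definition _ := Equality.copy instance (can_type instance_tupleK).

(* [ANode w m e c sib]: the edge e arrives next, stopping right after it is
   scored with weight w and witness matching m, c continues the arrival order
   after e, and sib is an alternative continuation of the order before e. *)
Inductive adv_tree :=
  | ALeaf
  | ANode of nat & seq edge & edge & adv_tree & adv_tree.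

Fixpoint instances (t : adv_tree) : seq instance :=
  if t is ANode w m e c sib then
    Instance w m [:: e]
      :: [seq Instance (weight x) (witness x) (e :: arrivals x) | x <- instances c]
      ++ instances sib
  else [::].

Fixpoint max_det_payoff (t : adv_tree) (past : seq edge) (dec : seq bool) : nat :=
  if t is ANode w _ e c sib then
    let branch b :=
      (w * count id (rcons dec b) + max_det_payoff c (rcons past e) (rcons dec b))%N in
    ((if feasible e (mask dec past) then maxn (branch true) (branch false)
      else branch false) + max_det_payoff sib past dec)%N
  else 0%N.

Lemma convex_le_maxn (R : realDomainType) (p x y : R) (a b : nat) :
  0 <= p <= 1 -> x <= a%:R -> y <= b%:R -> p * x + (1 - p) * y <= (maxn a b)%:R.
Proof.
move=> /andP[p_ge0 p_le1] xa yb.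
have : a%:R <= (maxn a b)%:R :> R by rewrite ler_nat leq_maxl.
have : b%:R <= (maxn a b)%:R :> R by rewrite ler_nat leq_maxr.
nra.
Qed.

Section TreeValue.
Variables (R : realType) (alg : online_alg R).

Definition tree_value (t : adv_tree) (past : seq edge) (dec : seq bool) : R :=
  \sum_(x <- instances t)
     (weight x)%:R * exp_run alg past dec (arrivals x) (size (arrivals x)).

Lemma tree_value_node w m e c sib past dec :
  let branch b :=
    w%:R * (count id (rcons dec b))%:R + tree_value c (rcons past e) (rcons dec b) in
  tree_value (ANode w m e c sib) past dec =
    (if feasible e (mask dec past) then
       alg past dec e * branch true + (1 - alg past dec e) * branch false
     else branch false)
    + tree_value sib past dec.
Proof.
rewrite /tree_value /= big_cons big_cat big_map /= addrA; congr (_ + _).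
case: ifP => _ //.
rewrite (mulrDr (alg _ _ _)) (mulrDr (1 - _)) addrACA mulrDr; congr (_ + _); first ring.
by rewrite !mulr_sumr -big_split; apply: eq_bigr => x _ /=; ring.
Qed.

Hypothesis alg_prob : forall past dec e, 0 <= alg past dec e <= 1.

Lemma tree_value_le_max_det t past dec :
  tree_value t past dec <= (max_det_payoff t past dec)%:R.
Proof.
elim: t past dec => [|w m e c IHc sib IHs] past dec; first by rewrite /tree_value big_nil.
rewrite tree_value_node /= natrD lerD //.
have branch_le b :
    w%:R * (count id (rcons dec b))%:R + tree_value c (rcons past e) (rcons dec b)
    <= (w * count id (rcons dec b) + max_det_payoff c (rcons past e) (rcons dec b))%:R.
  by rewrite natrD natrM lerD.
case: ifP => _; last exact: branch_le.
exact: convex_le_maxn (alg_prob past dec e) (branch_le true) (branch_le false).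
Qed.

End TreeValue.

Lemma matching_size_le_nu (m s : seq edge) :
  subseq m s -> is_matching m -> (size m <= nu s)%N.
Proof.
case/subseqP=> b size_b -> match_b.
pose tb : (size s).-tuple bool := Tuple (introT eqP size_b).
exact: (@leq_bigmax_cond _ (fun tb : (size s).-tuple bool => is_matching (mask tb s))
                           (fun tb => size (mask tb s)) tb).
Qed.

Definition certified (x : instance) : bool :=
  [&& valid_instance (arrivals x), subseq (witness x) (arrivals x)
    & is_matching (witness x)].

Definition witness_weight (t : adv_tree) : nat :=
  \sum_(x <- instances t) weight x * size (witness x).

Lemma exists_violated_instance (R : realType) (alg : online_alg R)
    (alg_prob : forall past dec e, 0 <= alg past dec e <= 1)
    (t : adv_tree) (gamma : R) :
  0 < gamma -> all certified (instances t) ->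
  (max_det_payoff t [::] [::])%:R < gamma * (witness_weight t)%:R ->
  exists2 x, x \in instances t &
    expected_size alg (arrivals x) (size (arrivals x)) < gamma * (nu (arrivals x))%:R.
Proof.
move=> gamma_gt0 /allP t_certified lt_weight; apply/hasP; apply/negPn/negP.
move=> /hasPn meets_gamma; move: lt_weight; apply/negP; rewrite -leNgt.
have := tree_value_le_max_det alg_prob t [::] [::]; apply: le_trans.
rewrite /witness_weight natr_sum mulr_sumr /tree_value !big_seq.
apply: ler_sum => x x_in_t.
have /and3P[_ sub_x match_x] := t_certified x x_in_t.
have := meets_gamma x x_in_t; rewrite -leNgt => le_exp.
rewrite natrM mulrCA ler_wpM2l //; apply: le_trans le_exp.
by rewrite ler_wpM2l ?ler_nat ?matching_size_le_nu // ltW.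
Qed.

Definition adv_path (nodes : seq (nat * seq edge * edge)) : adv_tree :=
  foldr (fun '(w, m, e) c => ANode w m e c ALeaf) ALeaf nodes.

(* After the path 2-0-1 the adversary either closes the triangle 0-1-2 and
   hangs the edge (0,3) on it, or grows a caterpillar of maximum degree three
   along the spine 2-0-1-3-4-6-8-...-18. *)
Definition hard_tree : adv_tree :=
  ANode 34 [:: (0, 1)] (0, 1)
    (ANode 0 [::] (0, 2)
       (ANode 0 [::] (1, 2)
          (adv_path [:: (55, [:: (1, 2); (0, 3)], (0, 3))])
          (adv_path
             [:: (21, [:: (0, 2); (1, 3)], (1, 3));
                 (0, [::], (3, 4));
                 (13, [:: (0, 2); (3, 4); (1, 5)], (1, 5));
                 (0, [::], (4, 6));
                 (8, [:: (0, 2); (1, 5); (4, 6); (3, 7)], (3, 7));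
                 (0, [::], (6, 8));
                 (5, [:: (0, 2); (1, 5); (3, 7); (6, 8); (4, 9)], (4, 9));
                 (0, [::], (8, 10));
                 (3, [:: (0, 2); (1, 5); (3, 7); (4, 9); (8, 10); (6, 11)], (6, 11));
                 (0, [::], (10, 12));
                 (2, [:: (0, 2); (1, 5); (3, 7); (4, 9); (6, 11); (10, 12); (8, 13)],
                  (8, 13));
                 (0, [::], (12, 14));
                 (1, [:: (0, 2); (1, 5); (3, 7); (4, 9); (6, 11); (8, 13); (12, 14);
                        (10, 15)], (10, 15));
                 (0, [::], (14, 16));
                 (1, [:: (0, 2); (1, 5); (3, 7); (4, 9); (6, 11); (8, 13); (10, 15);
                        (14, 16); (12, 17)], (12, 17));
                 (0, [::], (16, 18));
                 (1, [:: (0, 2); (1, 5); (3, 7); (4, 9); (6, 11); (8, 13); (10, 15);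
                        (12, 17); (16, 18); (14, 19)], (14, 19))]))
       ALeaf)
    ALeaf.

Lemma hard_tree_certified : all certified (instances hard_tree).
Proof. by vm_compute. Qed.

Lemma hard_tree_witness_weight : witness_weight hard_tree = 341%N.
Proof. by rewrite /witness_weight unlock; vm_compute. Qed.

Lemma hard_tree_max_det_payoff : max_det_payoff hard_tree [::] [::] = 198%N.
Proof. by vm_compute. Qed.

Theorem mainTheorem2 (R : realType) (alg : online_alg R)
  (alg_prob : forall (past : seq edge) (dec : seq bool) (e : edge),
      0 <= alg past dec e <= 1)
  (gamma : R) (hgamma : 58065%:R / 100000%:R < gamma) :
  exists (s : seq edge) (t : nat),
    [/\ valid_instance s, (t <= size s)%N &
        expected_size alg s t < gamma * (nu (take t s))%:R].
Proof.
have gamma_gt0 : 0 < gamma by apply: lt_trans hgamma; rewrite divr_gt0 ?ltr0n.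
have [x x_in violated] : exists2 x, x \in instances hard_tree &
    expected_size alg (arrivals x) (size (arrivals x)) < gamma * (nu (arrivals x))%:R.
  apply: exists_violated_instance alg_prob _ _ gamma_gt0 hard_tree_certified _.
  rewrite hard_tree_max_det_payoff hard_tree_witness_weight; lra.
have /and3P[valid_x _ _] := allP hard_tree_certified x x_in.
by exists (arrivals x), (size (arrivals x)); rewrite take_size.
Qed.
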